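(* Let $G$ be a simple connected graph with $N\ge 2$ nodes. Then $\gamma(G)=1$ if and only if $G$ is a path (linear graph).
   Context: All graphs are simple, undirected and connected. $h_{ij}$ is the shortest-path distance. For an ordered landmark set $\mathcal{M}=\{A_1,\dots,A_m\}\subseteq\mathcal{V}$, $\mathbf{P}_{\mathcal{M}}(i)=\langle h_{iA_1},\dots,h_{iA_m}\rangle$ and $\mathbf{P}_{\mathcal{M}}$ is the matrix with these rows. $\mathcal{M}$ is a construction set of $G$ if $G$ is the unique simple connected graph on $\mathcal{V}$ whose distance vector matrix for landmarks $\mathcal{M}$ equals $\mathbf{P}_{\mathcal{M}}$. The link dimension $\gamma(G)$ is the minimum cardinality of a construction set. *)

From mathcomp Require Import all_boot.
Set Implicit Arguments. Unset Strict Implicit. Unset Printing Implicit Defensive.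

Section Graphs.
Variable T : finType.

Definition simple_graph (e : rel T) : Prop :=
  symmetric e /\ irreflexive e.

Definition connected_graph (e : rel T) : Prop :=
  forall x y : T, connect e x y.

Definition simple_connected (e : rel T) : Prop :=
  simple_graph e /\ connected_graph e.

Fixpoint walk (e : rel T) (k : nat) (x y : T) : bool :=
  if k is k'.+1 then [exists z, e x z && walk e k' z y] else x == y.

(* Shortest-path distance h_xy: least k with a walk of length k from x to y
   (for a connected graph such k exists and is < #|T|). *)
Definition dist (e : rel T) (x y : T) : nat :=
  find (fun k => walk e k x y) (iota 0 #|T|).

Definition dist_vector (e : rel T) (M : seq T) (i : T) : seq nat :=
  [seq dist e i A | A <- M].

Definition construction_set (e : rel T) (M : seq T) : Prop :=
  uniq M /\ (0 < size M) /\
  forall e' : rel T, simple_connected e' ->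
    (forall i : T, dist_vector e' M i = dist_vector e M i) -> e' =2 e.

Definition is_link_dim (e : rel T) (k : nat) : Prop :=
  (exists M, construction_set e M /\ size M = k) /\
  (forall M, construction_set e M -> k <= size M).

Definition is_path_graph (e : rel T) : Prop :=
  exists s : seq T, perm_eq s (enum T) /\
    forall x y : T, e x y <->
      exists i, i.+1 < size s /\
        ((nth x s i = x /\ nth x s i.+1 = y) \/ (nth x s i = y /\ nth x s i.+1 = x)).

End Graphs.

From mathcomp Require Import all_boot zify.
Set Implicit Arguments. Unset Strict Implicit. Unset Printing Implicit Defensive.

(* The proof is organised around LEVEL FUNCTIONS rooted at a vertex A: maps
   f : T -> nat vanishing exactly at A, changing by at most one along edges,
   and such that every vertex x <> A has a neighbour one level lower.  The
   distance to A is a level function of any connected graph, and conversely a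
   level function of a graph is its distance to A.  Hence {A} is a
   construction set of e iff e is the unique simple graph having d = dist(-,A)
   as a level function.

   (=>) Both the graph joining consecutive levels of d and the graph joining
   distinct vertices whose levels differ by at most one admit d as a level
   function, so both equal e.  This forces d to be injective, so listing the
   vertices by level exhibits e as a path.
   (<=) If e is a path with end A, the position along the path is injective and
   is a level function of e; a simple graph with an injective level function is
   determined by it, hence {A} is a construction set. *)

Section Distances.
Variable T : finType.
Implicit Types (e : rel T) (x y z : T).

Lemma walkS e k x z y : e x z -> walk e k z y -> walk e k.+1 x y.
Proof. by move=> exz wzy; apply/existsP; exists z; apply/andP. Qed.

Lemma walk_connect e k x y : walk e k x y -> connect e x y.
Proof.
elim: k x => [|k IH] x /=; first by move/eqP->.
by case/existsP=> z /andP[exz /IH]; apply: connect_trans (connect1 exz).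
Qed.

Lemma path_walk e x p : path e x p -> walk e (size p) x (last x p).
Proof.
elim: p x => [|z p IH] x //= /andP[exz pz].
exact: walkS exz (IH _ pz).
Qed.

(* Connected vertices are joined by a walk shorter than the number of vertices
   (a duplicate-free path); this is why [dist] only searches below #|T|. *)
Lemma connect_walk e x y : connect e x y -> exists2 k, k < #|T| & walk e k x y.
Proof.
case/connectP=> p pth ->; have [p' pth' uniq_p' _] := shortenP pth.
exists (size p'); last exact: path_walk.
by have := max_card (mem (x :: p')); rewrite (card_uniqP uniq_p').
Qed.

Lemma dist_has e x y : connect e x y -> has (fun k => walk e k x y) (iota 0 #|T|).
Proof.
case/connect_walk=> k lt_kT wk; apply/hasP; exists k => //.
by rewrite mem_iota.
Qed.

Lemma dist_lt e x y : connect e x y -> dist e x y < #|T|.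
Proof. by move/dist_has; rewrite has_find size_iota. Qed.

Lemma dist_walk e x y : connect e x y -> walk e (dist e x y) x y.
Proof.
move=> cxy; have := nth_find 0 (dist_has cxy).
by rewrite nth_iota ?add0n //; apply: dist_lt.
Qed.

Lemma dist_min e k x y : connect e x y -> walk e k x y -> dist e x y <= k.
Proof.
move=> cxy wk; have [lt_kT|le_Tk] := ltnP k #|T|; last first.
  exact: leq_trans (ltnW (dist_lt cxy)) le_Tk.
rewrite leqNgt; apply/negP=> lt_k_dist.
by have := before_find 0 lt_k_dist; rewrite nth_iota // add0n wk.
Qed.
End Distances.

Section LevelFunctions.
Variables (T : finType) (A : T).
Implicit Types (e r : rel T) (f : T -> nat) (x y z : T).

Definition level_fun e f : Prop :=
  [/\ f A = 0, forall x, f x = 0 -> x = A,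
      forall x y, e x y -> f x <= (f y).+1
    & forall x, 0 < f x -> exists2 z, e x z & (f z).+1 = f x].

Lemma dist_level e : connected_graph e -> level_fun e (dist e ^~ A).
Proof.
move=> ce; split.
- by apply/eqP; rewrite -leqn0 (dist_min (ce A A) (eqxx A : walk e 0 A A)).
- by move=> x dx0; have := dist_walk (ce x A); rewrite dx0 => /eqP.
- by move=> x y exy; apply: dist_min (ce _ _) (walkS exy (dist_walk (ce y A))).
move=> x; have := dist_walk (ce x A).
case dx: (dist e x A) => [|k] // /existsP[z /andP[exz wz]] _.
exists z => //; have := dist_min (ce z A) wz.
have := dist_min (ce x A) (walkS exz (dist_walk (ce z A))); lia.
Qed.

Section Walks.
Variables (e : rel T) (f : T -> nat).
Hypothesis f_level : level_fun e f.

Lemma level_walk x : walk e (f x) x A.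
Proof.
case: f_level => _ f0 _ fdesc.
suff walk_at n y : f y = n -> walk e n y A by apply: walk_at.
elim: n y => [|n IH] y fy /=; first by rewrite (f0 y fy).
have [|z eyz fz] := fdesc y; first lia.
by apply: walkS eyz (IH _ _); lia.
Qed.

Lemma level_walk_lb k x : walk e k x A -> f x <= k.
Proof.
case: f_level => fA _ fstep _.
elim: k x => [|k IH] x /=; first by move/eqP->; rewrite fA.
by case/existsP=> z /andP[exz /IH]; have := fstep _ _ exz; lia.
Qed.

Lemma level_dist x : dist e x A = f x.
Proof.
have cxA := walk_connect (level_walk x).
by apply/eqP; rewrite eqn_leq dist_min ?level_walk // level_walk_lb ?dist_walk.
Qed.

Lemma level_connected : symmetric e -> connected_graph e.
Proof.
move=> e_sym x y; apply: connect_trans (walk_connect (level_walk x)) _.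
by rewrite (sym_connect_sym e_sym); apply: walk_connect (level_walk y).
Qed.
End Walks.

Lemma eq_level_fun e f g : f =1 g -> level_fun e f -> level_fun e g.
Proof.
move=> fg [fA f0 fstep fdesc]; split=> [|x|x y|x]; rewrite -?fg //.
- by move/f0.
- exact: fstep.
by move=> /fdesc[z exz fz]; exists z; rewrite -?fg.
Qed.

Lemma level_fun_sub e r f :
  level_fun e f -> (forall x y, r x y -> f x <= (f y).+1) ->
  (forall x z, e x z -> (f z).+1 = f x -> r x z) -> level_fun r f.
Proof.
case=> fA f0 _ fdesc rstep edesc; split=> // x /fdesc[z exz fz].
by exists z => //; apply: edesc.
Qed.
End LevelFunctions.

Section LevelGraphs.
Variables (T : finType) (f : T -> nat).
Implicit Types (e : rel T) (x y : T).

Definition consecutive : rel T :=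
  [rel x y | (f x == (f y).+1) || (f y == (f x).+1)].

Definition near : rel T :=
  [rel x y | [&& x != y, f x <= (f y).+1 & f y <= (f x).+1]].

Lemma consecutive_simple : simple_graph consecutive.
Proof.
split=> [x y|x]; rewrite /consecutive /=; first by rewrite orbC.
by rewrite orbb; apply/negbTE/eqP; lia.
Qed.

Lemma near_simple : simple_graph near.
Proof. by split=> [x y|x]; rewrite /near /= ?eqxx // eq_sym (andbC (f x <= _)). Qed.

Lemma consecutive_unique A e :
  injective f -> simple_graph e -> level_fun A e f -> e =2 consecutive.
Proof.
move=> f_inj [e_sym e_irr] [_ _ fstep fdesc] x y; rewrite /consecutive /=.
apply/idP/idP.
  move=> exy; have nfxy : f x != f y.
    by apply: contraTneq exy => /f_inj ->; rewrite e_irr.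
  have := fstep _ _ exy; rewrite e_sym in exy; have := fstep _ _ exy.
  by move/eqP: nfxy; lia.
have lower x' y' : f x' = (f y').+1 -> e x' y'.
  move=> fx'; have [|z ex'z fz] := fdesc x'; first lia.
  by have -> : y' = z by apply: f_inj; lia.
by case/orP=> /eqP /lower //; rewrite e_sym.
Qed.
End LevelGraphs.

Section Enumeration.
Variables (T : finType) (f : T -> nat).
Hypotheses (f_inj : injective f) (f_lt : forall x, f x < #|T|).

Lemma level_ord_bij : bijective (fun x => Ordinal (f_lt x) : 'I_#|T|).
Proof.
by apply: inj_card_bij; rewrite ?card_ord // => x y /(congr1 val) /f_inj.
Qed.

Lemma level_onto i : i < #|T| -> exists x, f x = i.
Proof.
move=> lt_iT; have [g fgK gfK] := level_ord_bij.
by exists (g (Ordinal lt_iT)); rewrite -[f _]/(val (Ordinal (f_lt _))) gfK.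
Qed.

Lemma level_enum : exists s, perm_eq s (enum T) /\ forall x, index x s = f x.
Proof.
have [g fgK gfK] := level_ord_bij.
exists [seq g i | i <- enum 'I_#|T|]; split.
  apply: uniq_perm; rewrite ?(map_inj_uniq (can_inj gfK)) ?enum_uniq //.
  move=> x; rewrite mem_enum -(fgK x) map_f ?mem_enum //.
by move=> x; rewrite -{1}(fgK x) (index_map (can_inj gfK)) index_enum_ord.
Qed.

(* Since every lower level is occupied, [f] is a level function of its own
   consecutive-level graph, rooted at the vertex of level 0. *)
Lemma consecutive_level A : f A = 0 -> level_fun A (consecutive f) f.
Proof.
move=> fA; split=> //.
- by move=> x fx0; apply: f_inj; rewrite fx0 fA.
- by move=> x y; rewrite /consecutive /= => /orP[] /eqP ->; lia.
move=> x fx_pos; have [|z fz] := @level_onto (f x).-1; first by have := f_lt x; lia.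
by exists z; rewrite /consecutive /= fz; lia.
Qed.
End Enumeration.

Lemma consecutive_positions (T : finType) (s : seq T) (x y : T) :
  uniq s -> x \in s -> y \in s ->
  (exists i, i.+1 < size s /\
     ((nth x s i = x /\ nth x s i.+1 = y) \/ (nth x s i = y /\ nth x s i.+1 = x)))
  <-> consecutive (index^~ s) x y.
Proof.
move=> s_uniq x_in y_in; rewrite /consecutive /=.
have pos w i : w \in s -> i < size s -> nth x s i = w -> index w s = i.
  by move=> w_in lt_is <-; rewrite index_uniq.
split=> [[i [lt_is hi]]|].
  have lt_i := ltnW lt_is.
  case: hi => [[/(pos _ _ x_in lt_i) -> /(pos _ _ y_in lt_is) ->]|
               [/(pos _ _ y_in lt_i) -> /(pos _ _ x_in lt_is) ->]];
    by rewrite eqxx ?orbT.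
case/orP=> /eqP h.
  exists (index y s); rewrite -h index_mem; split=> //.
  by right; rewrite !nth_index.
exists (index x s); rewrite -h index_mem; split=> //.
by left; rewrite !nth_index.
Qed.

Lemma path_graphP (T : finType) (e : rel T) :
  is_path_graph e <->
  exists s, perm_eq s (enum T) /\ e =2 consecutive (index^~ s).
Proof.
split=> -[s [ps hs]]; exists s; split=> // x y.
all: have s_uniq : uniq s by rewrite (perm_uniq ps) enum_uniq.
all: have in_s w : w \in s by rewrite (perm_mem ps) mem_enum.
  by apply/idP/idP=> [/hs|] /(consecutive_positions s_uniq (in_s x) (in_s y)) // /hs.
by rewrite hs; apply: iff_sym; apply: consecutive_positions.
Qed.

Lemma singleton_construction_path (T : finType) (e : rel T) (A : T) :
  simple_connected e -> construction_set e [:: A] -> is_path_graph e.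
Proof.
move=> [e_simple ce] [_ [_ e_unique]].
set d := dist e ^~ A; have d_level : level_fun A e d := dist_level A ce.
have forced r : simple_graph r -> level_fun A r d -> r =2 e.
  move=> [r_sym r_irr] r_level; apply: e_unique.
    by split; [split|apply: level_connected r_level r_sym].
  by move=> i; rewrite /dist_vector /= (level_dist r_level).
have e_cons : consecutive d =2 e.
  apply: forced (consecutive_simple d) (level_fun_sub d_level _ _) => x y.
    by rewrite /consecutive /= => /orP[] /eqP ->; lia.
  by move=> _ dxy; rewrite /consecutive /= -dxy eqxx.
have e_near : near d =2 e.
  apply: forced (near_simple d) (level_fun_sub d_level _ _) => x y.
    by rewrite /near /= => /and3P[].
  move=> exy dxy; rewrite /near /=; apply/and3P; split; try lia.
  by apply: contraTneq exy => ->; case: e_simple => _ ->.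
have d_inj : injective d.
  move=> x y dxy; apply/eqP; apply: contraT => nxy.
  have := e_near x y; rewrite -e_cons /near /consecutive /= nxy dxy leqnSn.
  by move/esym/orP => -[] /eqP; lia.
have [s [ps index_s]] := level_enum d_inj (fun x => dist_lt (ce x A)).
apply/path_graphP; exists s; split=> // x y.
by rewrite -e_cons /consecutive /= !index_s.
Qed.

Lemma path_singleton_construction (T : finType) (e : rel T) :
  0 < #|T| -> is_path_graph e -> exists A, construction_set e [:: A].
Proof.
move=> T_pos /path_graphP[s [ps e_cons]].
set f := index^~ s.
have in_s x : x \in s by rewrite (perm_mem ps) mem_enum.
have f_inj : injective f by move=> x y; apply: index_inj.
have f_lt x : f x < #|T| by rewrite cardE -(perm_size ps) index_mem.
have [A fA] := level_onto f_inj f_lt T_pos.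
have e_level : level_fun A e f.
  apply: level_fun_sub (consecutive_level f_inj f_lt fA) _ _ => x y.
    by rewrite e_cons /consecutive /f /= => /orP[] /eqP; lia.
  by rewrite e_cons.
exists A; split=> //; split=> // e' [e'_simple ce'] same_dist.
have e'_level : level_fun A e' f.
  have dist_e' x : dist e' x A = f x.
    by have := same_dist x; rewrite /dist_vector /= (level_dist e_level) => -[].
  exact: eq_level_fun dist_e' (dist_level A ce').
move=> x y; rewrite e_cons; exact: consecutive_unique f_inj e'_simple e'_level x y.
Qed.

Theorem proposition1 (T : finType) (e : rel T) :
  simple_connected e -> 2 <= #|T| ->
  (is_link_dim e 1 <-> is_path_graph e).
Proof.
move=> e_sc T_ge2; split.
  case=> -[[|A [|B M]] [M_constr M_size]] _ //.
  exact: singleton_construction_path e_sc M_constr.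
case/(path_singleton_construction (ltnW T_ge2))=> A A_constr.
split; first by exists [:: A].
by move=> M [_ []].
Qed.
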